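(* Let $k\ge 1$ and let $T$ be an array whose positions $0,\dots,2k-1$ hold $n=2k$ elements, the first $k$ forming one list and the last $k$ another. Run $\textsc{Merge}(T,0,k,k)$ (defined in the context). Then the expected number of random bits it consumes to produce the merged array of size $n$ is $n+\Theta(\sqrt{n}\log n)$ as $n\to\infty$.
   Context: The procedure $\textsc{Merge}(T,s,n_1,n_2)$: set $i\gets s$, $j\gets s+n_1$, $n\gets s+n_1+n_2$. Repeat: draw an independent fair random bit; if it is $0$, then break out of the loop if $i=j$; if it is $1$, then break out of the loop if $j=n$, and otherwise swap $T[i]$ and $T[j]$ and set $j\gets j+1$; in either non-breaking case set $i\gets i+1$. After the loop, while $i<n$: draw an integer $m$ uniformly at random from $\{s,\dots,i\}$ (independently of everything else), swap $T[i]$ and $T[m]$, and set $i\gets i+1$. Cost model: each fair bit drawn in the first loop costs one random bit, and drawing a uniform integer from a set of $K$ elements costs $\lceil \log_2 K\rceil$ random bits. *)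

From Stdlib Require Import Reals Arith Lra.
Open Scope R_scope.

(* Cost in random bits of drawing a uniform integer from a set of K elements:
   ceil(log2 K) (Nat.log2_up K; equals 0 for K = 1). *)
Definition unif_cost (K : nat) : nat := Nat.log2_up K.

(* Cost (deterministic) of the second loop of Merge(T,s,n1,n2) started at
   index i with end index n: for each i' = i, ..., n-1 one draws m uniformly
   from {s,...,i'}, a set of i' - s + 1 elements. *)
Fixpoint tail_cost_aux (s i len : nat) : nat :=
  match len with
  | O => O
  | S l => (unif_cost (i - s + 1) + tail_cost_aux s (S i) l)%nat
  end.

Definition tail_cost (s n i : nat) : nat := tail_cost_aux s i (n - i).

(* Expected number of random bits consumed by Merge from the state (i, j)
   at the top of the first loop (with end index n), following the procedure:
   draw a fair bit (cost 1);
   - bit 0: break if i = j, otherwise i <- i+1;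
   - bit 1: break if j = n, otherwise (swap) j <- j+1, i <- i+1;
   after a break, the second loop costs tail_cost s n i.
   The bit counts and loop costs do not depend on the array contents.
   [fuel] bounds the number of first-loop iterations; fuel n - i + 1 always
   suffices (i increases at each non-breaking iteration and i <= j <= n). *)
Fixpoint merge_ecost (fuel : nat) (s n i j : nat) : R :=
  match fuel with
  | O => 0
  | S f =>
      1 + / 2 * (if Nat.eqb i j then INR (tail_cost s n i)
                 else merge_ecost f s n (S i) j)
        + / 2 * (if Nat.eqb j n then INR (tail_cost s n i)
                 else merge_ecost f s n (S i) (S j))
  end.

Definition merge_expected_bits (s n1 n2 : nat) : R :=
  merge_ecost (n1 + n2 + 1) s (s + n1 + n2) s (s + n1).

(* The first loop of Merge is a symmetric random walk on the numbers (x, y) of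
   elements still waiting in the two lists: every fair bit removes one element,
   until a bit asks for an exhausted list.  If D elements are then left, the
   first loop has drawn n + 1 - D bits and the second loop draws D uniform
   integers from sets of size about n, i.e. about D log2 n bits, so the excess
   over n is E[D] (log2 n - 1) + O(1) up to the rounding of the logarithms.
   Optional stopping for the harmonic polynomials (x - y)^2 + x + y and a
   quartic companion gives E[D^2 + 3 D] = 2k and E[D^4] <= 12 k^2, which pin
   E[D] between constant multiples of sqrt k. *)

From Stdlib Require Import Reals Arith Lra Lia.
Open Scope R_scope.

(* For Merge, x = j - i and y = n - j count the elements still
   waiting in the two lists. *)
Fixpoint walk_value (h : nat -> R) (c : R) (fuel x y : nat) : R :=
  match fuel with
  | O => 0
  | S f =>
      c + / 2 * (match x with O => h y | S x' => walk_value h c f x' y end)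
        + / 2 * (match y with O => h x | S y' => walk_value h c f x y' end)
  end.

Lemma walk_value_S h c f x y :
  walk_value h c (S f) x y
  = c + / 2 * (match x with O => h y | S x' => walk_value h c f x' y end)
      + / 2 * (match y with O => h x | S y' => walk_value h c f x y' end).
Proof. reflexivity. Qed.

Lemma walk_value_ext h1 h2 c f x y :
  (forall D, h1 D = h2 D) -> walk_value h1 c f x y = walk_value h2 c f x y.
Proof.
  intros Hh; revert x y; induction f as [|f IH]; intros x y; simpl; trivial.
  destruct x, y; rewrite ?Hh, ?IH; reflexivity.
Qed.

Lemma walk_value_plus h1 h2 f x y :
  walk_value (fun D => h1 D + h2 D) 0 f x y
  = walk_value h1 0 f x y + walk_value h2 0 f x y.
Proof.
  revert x y; induction f as [|f IH]; intros x y; simpl; [ring|].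
  destruct x, y; rewrite ?IH; ring.
Qed.

Lemma walk_value_scal a h f x y :
  walk_value (fun D => a * h D) 0 f x y = a * walk_value h 0 f x y.
Proof.
  revert x y; induction f as [|f IH]; intros x y; simpl; [ring|].
  destruct x, y; rewrite ?IH; ring.
Qed.

Lemma walk_value_const a f x y :
  (x + y <= f)%nat -> walk_value (fun _ => a) 0 (S f) x y = a.
Proof.
  revert x y; induction f as [|f IH]; intros x y Hf.
  - assert (x = 0%nat) by lia; assert (y = 0%nat) by lia; subst; simpl; lra.
  - rewrite walk_value_S; destruct x, y; rewrite ?IH by lia; lra.
Qed.

Lemma walk_value_le (B : nat) h1 h2 f x y :
  (forall D, (D <= B)%nat -> h1 D <= h2 D) -> (x <= B)%nat -> (y <= B)%nat ->
  walk_value h1 0 f x y <= walk_value h2 0 f x y.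
Proof.
  intros Hh; revert x y; induction f as [|f IH]; intros x y Hx Hy; simpl; [lra|].
  assert (Hl : match x with O => h1 y | S x' => walk_value h1 0 f x' y end
            <= match x with O => h2 y | S x' => walk_value h2 0 f x' y end)
    by (destruct x; [apply Hh | apply IH]; lia).
  assert (Hr : match y with O => h1 x | S y' => walk_value h1 0 f x y' end
            <= match y with O => h2 x | S y' => walk_value h2 0 f x y' end)
    by (destruct y; [apply Hh | apply IH]; lia).
  lra.
Qed.

(* Every step but the last consumes one element, so the walk from (x, y)
   makes x + y + 1 - D steps when it stops with D elements left. *)
Lemma walk_value_cost h c m x y : (x + y = m)%nat ->
  walk_value h c (S m) x y
  = walk_value (fun D => h D - c * INR D) 0 (S m) x y + c * INR (S m).
Proof.
  revert x y; induction m as [|m IH]; intros x y Hm.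
  - assert (x = 0%nat) by lia; assert (y = 0%nat) by lia; subst; simpl; ring.
  - rewrite !walk_value_S.
    destruct x as [|x], y as [|y]; try lia; rewrite ?IH by lia; rewrite !S_INR.
    + replace y with m by lia; lra.
    + replace x with m by lia; lra.
    + lra.
Qed.

Lemma merge_ecost_walk s n m x y i j :
  (x + y = m)%nat -> (m <= n)%nat -> i = (n - x - y)%nat -> j = (n - y)%nat ->
  merge_ecost (S m) s n i j
  = walk_value (fun D => INR (tail_cost s n (n - D))) 1 (S m) x y.
Proof.
  revert x y i j; induction m as [|m IH]; intros x y i j Hm Hn Hi Hj.
  - assert (x = 0%nat) by lia; assert (y = 0%nat) by lia; subst.
    simpl; rewrite !Nat.sub_0_r, Nat.eqb_refl; reflexivity.
  - change (merge_ecost (S (S m)) s n i j) with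
      (1 + / 2 * (if Nat.eqb i j then INR (tail_cost s n i)
                  else merge_ecost (S m) s n (S i) j)
         + / 2 * (if Nat.eqb j n then INR (tail_cost s n i)
                  else merge_ecost (S m) s n (S i) (S j))).
    rewrite walk_value_S.
    destruct x as [|x], y as [|y]; try lia.
    + rewrite (proj2 (Nat.eqb_eq i j)), (proj2 (Nat.eqb_neq j n)), (IH 0%nat y) by lia.
      replace i with (n - S y)%nat by lia; reflexivity.
    + rewrite (proj2 (Nat.eqb_neq i j)), (proj2 (Nat.eqb_eq j n)), (IH x 0%nat) by lia.
      replace i with (n - S x)%nat by lia; reflexivity.
    + rewrite (proj2 (Nat.eqb_neq i j)), (proj2 (Nat.eqb_neq j n)) by lia.
      rewrite (IH x (S y)), (IH (S x) y) by lia; reflexivity.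
Qed.

(* The payoff at (0, D) that makes [G] the value of the walk: solve
   G 0 D = (payoff D + G 0 (D - 1)) / 2. *)
Definition harmonic_boundary (G : R -> R -> R) (D : R) : R := 2 * G 0 D - G 0 (D - 1).

Lemma walk_value_harmonic (G : R -> R -> R) :
  (forall u v, G u v = G v u) ->
  (forall u v, G u v = / 2 * G (u - 1) v + / 2 * G u (v - 1)) ->
  forall m x y, (x + y = m)%nat ->
  walk_value (fun D => harmonic_boundary G (INR D)) 0 (S m) x y = G (INR x) (INR y).
Proof.
  intros Gsym Gmean.
  assert (Hstep : forall x y : nat, G (INR x) (INR y)
    = / 2 * (match x with O => harmonic_boundary G (INR y) | S x' => G (INR x') (INR y) end)
    + / 2 * (match y with O => harmonic_boundary G (INR x) | S y' => G (INR x) (INR y') end)).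
  { unfold harmonic_boundary; intros [|x] [|y]; rewrite ?S_INR, ?Rplus_minus_r.
    - (* (0, 0): the mean-value property at the origin gives G 0 (-1) = G 0 0 *)
      pose proof (Gmean 0 0) as H00; rewrite (Gsym (0 - 1)) in H00; simpl; lra.
    - simpl INR; lra.
    - rewrite (Gsym (INR x + 1)), (Gsym (INR x)); simpl INR; lra.
    - rewrite (Gmean (INR x + 1)), !Rplus_minus_r; lra. }
  induction m as [|m IH]; intros x y Hm.
  - assert (x = 0%nat) by lia; assert (y = 0%nat) by lia; subst.
    rewrite (Hstep 0%nat 0%nat); simpl; ring.
  - rewrite walk_value_S, (Hstep x y).
    destruct x, y; rewrite ?IH by lia; ring.
Qed.

Definition quad_harmonic (u v : R) : R := (u - v) ^ 2 + u + v.

Definition quartic_harmonic (u v : R) : R :=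
  (u - v) ^ 4 + 6 * (u + v) * (u - v) ^ 2 + 3 * (u + v) ^ 2 - 2 * (u + v).

Lemma walk_second_moment m x y : (x + y = m)%nat ->
  walk_value (fun D => INR D ^ 2) 0 (S m) x y + 3 * walk_value INR 0 (S m) x y
  = quad_harmonic (INR x) (INR y).
Proof.
  intros Hm.
  rewrite <- walk_value_scal, <- walk_value_plus.
  rewrite (walk_value_ext _ (fun D => harmonic_boundary quad_harmonic (INR D)))
    by (intros; unfold harmonic_boundary, quad_harmonic; ring).
  apply walk_value_harmonic; trivial; intros; unfold quad_harmonic; field.
Qed.

Lemma walk_fourth_moment_le m x y : (x + y = m)%nat ->
  walk_value (fun D => INR D ^ 4) 0 (S m) x y <= quartic_harmonic (INR x) (INR y).
Proof.
  intros Hm.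
  rewrite <- (walk_value_harmonic quartic_harmonic) with (m := m) by
    (trivial; intros; unfold quartic_harmonic; field).
  apply (walk_value_le m); try lia.
  intros D _; pose proof (pos_INR D) as HD.
  assert (HD1 : 0 <= INR D * (INR D - 1)).
  { destruct D; [simpl; lra|]. rewrite S_INR; pose proof (pos_INR D); nra. }
  unfold harmonic_boundary, quartic_harmonic.
  nra.
Qed.

Definition expected_leftover (k : nat) : R := walk_value INR 0 (S (2 * k)) k k.

Lemma expected_leftover_ge0 k : 0 <= expected_leftover k.
Proof.
  rewrite <- (walk_value_const 0 (2 * k) k k) by lia.
  apply (walk_value_le k); trivial; intros; apply pos_INR.
Qed.

Lemma leftover_second_moment k :
  walk_value (fun D => INR D ^ 2) 0 (S (2 * k)) k k + 3 * expected_leftover k = 2 * INR k.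
Proof.
  unfold expected_leftover; rewrite (walk_second_moment (2 * k)) by lia.
  unfold quad_harmonic; ring.
Qed.

Lemma leftover_fourth_moment_le k :
  walk_value (fun D => INR D ^ 4) 0 (S (2 * k)) k k <= 12 * INR k ^ 2.
Proof.
  eapply Rle_trans; [apply (walk_fourth_moment_le (2 * k)); lia|].
  unfold quartic_harmonic; pose proof (pos_INR k); nra.
Qed.

Lemma le_sq_div_plus t d : 0 < t -> d <= / (4 * t) * d ^ 2 + t.
Proof.
  intros Ht.
  assert (E : / (4 * t) * d ^ 2 + t - d = / (4 * t) * (d - 2 * t) ^ 2) by (field; lra).
  assert (0 <= / (4 * t) * (d - 2 * t) ^ 2)
    by (apply Rmult_le_pos; [apply Rlt_le, Rinv_0_lt_compat | apply pow2_ge_0]; lra).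
  lra.
Qed.

Lemma sq_le_lin_quartic t d : 0 < t -> 0 <= d -> d ^ 2 <= t * d + / t ^ 2 * d ^ 4.
Proof.
  intros Ht Hd.
  assert (E : t * d + / t ^ 2 * d ^ 4 - d ^ 2
              = / t ^ 2 * (d * ((d - t) ^ 2 * (d + t) + d ^ 2 * t))) by (field; lra).
  assert (0 <= / t ^ 2 * (d * ((d - t) ^ 2 * (d + t) + d ^ 2 * t))).
  { apply Rmult_le_pos; [apply Rlt_le, Rinv_0_lt_compat, pow_lt; lra|].
    apply Rmult_le_pos; [lra|].
    pose proof (pow2_ge_0 (d - t)); pose proof (pow2_ge_0 d); nra. }
  lra.
Qed.

(* From E[D^2] = 2k - 3 E[D] and D <= D^2 / (4 t) + t with t = sqrt k. *)
Lemma expected_leftover_le k : (1 <= k)%nat ->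
  expected_leftover k <= 3 / 2 * sqrt (INR k).
Proof.
  intros Hk.
  assert (HK : 1 <= INR k) by (apply (le_INR 1); lia).
  set (t := sqrt (INR k)).
  assert (Ht : 0 < t) by (apply sqrt_lt_R0; lra).
  assert (Htt : t * t = INR k) by (apply sqrt_sqrt; lra).
  assert (Hle : expected_leftover k
    <= / (4 * t) * walk_value (fun D => INR D ^ 2) 0 (S (2 * k)) k k + t).
  { rewrite <- (walk_value_const t (2 * k) k k) at 2 by lia.
    rewrite <- walk_value_scal, <- walk_value_plus.
    apply (walk_value_le k); trivial; intros D _; apply le_sq_div_plus, Ht. }
  pose proof (leftover_second_moment k); pose proof (expected_leftover_ge0 k).
  assert (/ (4 * t) * walk_value (fun D => INR D ^ 2) 0 (S (2 * k)) k k <= t / 2).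
  { apply (Rmult_le_reg_l (4 * t)); [lra|].
    rewrite <- Rmult_assoc, Rinv_r by lra; nra. }
  lra.
Qed.

(* From E[D^2] <= t E[D] + E[D^4] / t^2 with t = 4 sqrt k. *)
Lemma expected_leftover_ge k : (1 <= k)%nat ->
  5 / 28 * sqrt (INR k) <= expected_leftover k.
Proof.
  intros Hk.
  assert (HK : 1 <= INR k) by (apply (le_INR 1); lia).
  set (s := sqrt (INR k)).
  assert (Hs : 1 <= s) by (rewrite <- sqrt_1; apply sqrt_le_1_alt; lra).
  assert (Hss : s * s = INR k) by (apply sqrt_sqrt; lra).
  set (t := 4 * s).
  assert (Hle : walk_value (fun D => INR D ^ 2) 0 (S (2 * k)) k k
    <= t * expected_leftover k
       + / t ^ 2 * walk_value (fun D => INR D ^ 4) 0 (S (2 * k)) k k).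
  { unfold expected_leftover; rewrite <- !walk_value_scal, <- walk_value_plus.
    apply (walk_value_le k); trivial; intros D _.
    apply sq_le_lin_quartic; [unfold t; lra | apply pos_INR]. }
  pose proof (leftover_second_moment k); pose proof (leftover_fourth_moment_le k).
  pose proof (expected_leftover_ge0 k).
  assert (/ t ^ 2 * walk_value (fun D => INR D ^ 4) 0 (S (2 * k)) k k <= 3 / 4 * INR k).
  { apply (Rmult_le_reg_l (t ^ 2)); [unfold t; nra|].
    rewrite <- Rmult_assoc, Rinv_r by (unfold t; nra). unfold t; nra. }
  unfold t in *; nra.
Qed.

Lemma tail_cost_aux_bounds s i len a b :
  (forall t, (i <= t < i + len)%nat -> (a <= unif_cost (t - s + 1) <= b)%nat) ->
  (len * a <= tail_cost_aux s i len <= len * b)%nat.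
Proof.
  revert i; induction len as [|len IH]; intros i Hab; simpl; [lia|].
  assert (Hi := Hab i ltac:(lia)).
  assert (IHi := IH (S i) ltac:(intros t Ht; apply Hab; lia)).
  lia.
Qed.

Lemma tail_cost_bounds n D : (D <= n)%nat ->
  (Nat.log2_up (n - D + 1) * D <= tail_cost 0 n (n - D) <= Nat.log2_up n * D)%nat.
Proof.
  intros HD; unfold tail_cost; replace (n - (n - D))%nat with D by lia.
  rewrite !(Nat.mul_comm _ D); apply tail_cost_aux_bounds.
  intros t Ht; unfold unif_cost; split; apply Nat.log2_up_le_mono; lia.
Qed.

Lemma ln_le x y : 0 < x -> x <= y -> ln x <= ln y.
Proof.
  intros Hx [Hxy | ->]; [left; apply ln_increasing | right]; trivial.
Qed.

Lemma log2_up_ln n : (1 < n)%nat ->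
  (INR (Nat.log2_up n) - 1) * ln 2 < ln (INR n) <= INR (Nat.log2_up n) * ln 2.
Proof.
  intros Hn; destruct (Nat.log2_up_spec n Hn) as [Hlo Hhi].
  assert (Hp : (1 <= Nat.log2_up n)%nat) by (apply Nat.log2_up_pos; lia).
  rewrite <- Nat.sub_1_r in Hlo.
  apply lt_INR in Hlo; apply le_INR in Hhi; rewrite pow_INR in Hlo, Hhi.
  change (INR 2) with 2 in Hlo, Hhi.
  replace (INR (Nat.log2_up n) - 1) with (INR (Nat.log2_up n - 1))
    by (rewrite minus_INR; trivial).
  rewrite <- !ln_pow by lra; split.
  - apply ln_increasing; [apply pow_lt; lra | exact Hlo].
  - apply ln_le; [apply (lt_INR 0); lia | exact Hhi].
Qed.

Lemma merge_excess_walk k :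
  merge_expected_bits 0 k k - INR (2 * k)
  = walk_value (fun D => INR (tail_cost 0 (2 * k) (2 * k - D)) - INR D) 0 (S (2 * k)) k k
    + 1.
Proof.
  unfold merge_expected_bits.
  replace (k + k + 1)%nat with (S (2 * k)) by lia.
  replace (0 + k + k)%nat with (2 * k)%nat by lia.
  rewrite (merge_ecost_walk 0 (2 * k) (2 * k) k k) by lia.
  rewrite walk_value_cost by lia; rewrite S_INR.
  rewrite (walk_value_ext _ (fun D => INR (tail_cost 0 (2 * k) (2 * k - D)) - INR D))
    by (intros; ring).
  ring.
Qed.

Lemma merge_excess_bounds k : (1 <= k)%nat ->
  (INR (Nat.log2_up (k + 1)) - 1) * expected_leftover k + 1
    <= merge_expected_bits 0 k k - INR (2 * k) /\
  merge_expected_bits 0 k k - INR (2 * k)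
    <= (INR (Nat.log2_up (2 * k)) - 1) * expected_leftover k + 1.
Proof.
  intros Hk; rewrite merge_excess_walk; unfold expected_leftover.
  rewrite <- !walk_value_scal; split; apply Rplus_le_compat_r, (walk_value_le k);
    trivial; intros D HD;
    destruct (tail_cost_bounds (2 * k) D ltac:(lia)) as [Hlo Hhi];
    apply le_INR in Hlo, Hhi; rewrite mult_INR in Hlo, Hhi.
  - assert (INR (Nat.log2_up (k + 1)) <= INR (Nat.log2_up (2 * k - D + 1)))
      by (apply le_INR, Nat.log2_up_le_mono; lia).
    pose proof (pos_INR D); nra.
  - lra.
Qed.

Lemma log2_up_ge_half_ln k : (8 <= k)%nat ->
  ln (INR (2 * k)) / 2 <= INR (Nat.log2_up (k + 1)) - 1.
Proof.
  intros Hk.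
  assert (HK : 8 <= INR k) by (replace 8 with (INR 8) by (simpl; lra); apply le_INR; lia).
  destruct (log2_up_ln (k + 1) ltac:(lia)) as [_ Hup].
  rewrite plus_INR in Hup; change (INR 1) with 1 in Hup.
  assert (Hln : ln (INR k) <= ln (INR k + 1)) by (apply ln_le; lra).
  rewrite mult_INR; change (INR 2) with 2.
  assert (H2k : ln (2 * INR k) = ln 2 + ln (INR k)) by (apply ln_mult; lra).
  (* ln (2 k) / 2 <= ln (k / 2) exactly when k >= 8 *)
  assert (H8 : 3 * ln 2 <= ln (INR k)).
  { replace 3 with (INR 3) by (simpl; ring); rewrite <- ln_pow by lra.
    apply ln_le; simpl; lra. }
  assert (Hln2 : 0 < ln 2 <= 1).
  { split; [rewrite <- ln_1; apply ln_increasing; lra|].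
    rewrite <- (ln_exp 1); apply ln_le; [lra|].
    pose proof (exp_ineq1 1 ltac:(lra)); lra. }
  nra.
Qed.

Lemma log2_up_le_twice_ln n : (1 < n)%nat ->
  INR (Nat.log2_up n) - 1 <= 2 * ln (INR n).
Proof.
  intros Hn; destruct (log2_up_ln n Hn) as [Hlo _].
  pose proof ln_lt_2.
  assert (1 <= INR (Nat.log2_up n)) by (apply (le_INR 1), Nat.log2_up_pos; lia).
  nra.
Qed.

Theorem mainTheorem2 :
  exists (c1 c2 : R) (N : nat),
    0 < c1 /\ 0 < c2 /\
    forall k : nat, (1 <= k)%nat -> (N <= k)%nat ->
      c1 * (sqrt (INR (2 * k)) * ln (INR (2 * k)))
        <= merge_expected_bits 0 k k - INR (2 * k) /\
      merge_expected_bits 0 k k - INR (2 * k)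
        <= c2 * (sqrt (INR (2 * k)) * ln (INR (2 * k))).
Proof.
  exists (1 / 25), 4, 8%nat; split; [lra|]; split; [lra|].
  intros k Hk H8.
  assert (HK : 8 <= INR k) by (replace 8 with (INR 8) by (simpl; lra); apply le_INR; lia).
  destruct (merge_excess_bounds k Hk) as [Hlo Hhi].
  pose proof (expected_leftover_ge k Hk); pose proof (expected_leftover_le k Hk).
  pose proof (log2_up_ge_half_ln k H8); pose proof (log2_up_le_twice_ln (2 * k) ltac:(lia)).
  set (s := sqrt (INR k)) in *; set (L := ln (INR (2 * k))) in *.
  assert (Hs : 1 <= s) by (unfold s; rewrite <- sqrt_1; apply sqrt_le_1_alt; lra).
  assert (HL : 1 <= L).
  { unfold L; rewrite <- (ln_exp 1); apply ln_le; [apply exp_pos|].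
    pose proof exp_le_3; rewrite mult_INR; simpl INR; lra. }
  assert (Hsqrt : s <= sqrt (INR (2 * k)) <= 2 * s).
  { rewrite mult_INR, sqrt_mult by (simpl; lra); change (INR 2) with 2; unfold s.
    assert (1 <= sqrt 2 <= 2).
    { split; [rewrite <- sqrt_1 at 1 | rewrite <- (sqrt_pow2 2) at 2 by lra];
        apply sqrt_le_1_alt; lra. }
    pose proof (sqrt_pos (INR k)); nra. }
  split; nra.
Qed.
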